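(* Let $X$ be a Hausdorff topological space and let $f:X\to X$ be a continuous weak topological contraction. Then $f$ has a unique fixed point.
   Context: A mapping $f:X\to X$ (not necessarily continuous or closed) is a weak topological contraction if for every open cover $\mathcal{U}$ of $X$ and every pair of points $x,y\in X$ there exist $n\in\mathbb{N}_0=\{0,1,2,\dots\}$ and $U\in\mathcal{U}$ such that $f^n[\{x,y\}]\subseteq U$, where $f^n$ is the $n$-fold iterate of $f$ and $f^0$ is the identity. *)

From HB Require Import structures.
From mathcomp Require Import all_boot all_order.
From mathcomp Require Import all_classical all_reals topology.
Set Implicit Arguments. Unset Strict Implicit. Unset Printing Implicit Defensive.
Local Open Scope classical_set_scope.

Definition open_cover {X : topologicalType} (U : set (set X)) : Prop :=
  (forall A, U A -> open A) /\ \bigcup_(A in U) A = [set: X].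

Definition weak_top_contraction {X : topologicalType} (f : X -> X) : Prop :=
  forall U : set (set X), open_cover U ->
  forall x y : X, exists n : nat, exists2 A, U A & (iter n f) @` [set x; y] `<=` A.

From mathcomp Require Import all_boot all_order.
From mathcomp Require Import all_classical all_reals topology.
Local Open Scope classical_set_scope.

(* Uniqueness: two distinct fixed points x, y never enter a common member of
   the cover {X \ {x}, X \ {y}}.  Existence: if f had no fixed point, then by
   continuity and the Hausdorff property the open sets A with A ∩ f⁻¹(A) = ∅
   would cover X, yet some iterate brings a point z and its image f z into a
   common such A. *)

Lemma open_cover_fixfree {X : topologicalType} {f : X -> X} :
  hausdorff_space X -> continuous f -> (forall z, f z <> z) ->
  open_cover [set A : set X | open A /\ A `&` f @^-1` A = set0].
Proof.
move=> hX hf fixfree; split; first by move=> A [].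
apply/seteqP; split => // z _.
have zfz : z != f z by apply/eqP => /esym/fixfree.
move: hX; rewrite open_hausdorff => /(_ z (f z) zfz).
move=> [[U V] /= [/set_mem Uz /set_mem Vfz] [oU oV /eqP UV]].
exists (U `&` f @^-1` V) => //; split.
  by apply: openI => //; exact: (proj1 (continuousP f) hf).
apply/seteqP; split => // w [[_ Vfw] [Ufw _]].
by have : (U `&` V) (f w) by []; rewrite UV.
Qed.

Section WeakTopContraction.
Context {X : topologicalType} {f : X -> X}.
Hypothesis hwc : weak_top_contraction f.

Lemma weak_top_contraction_iter {U : set (set X)} : open_cover U ->
  forall x y, exists n A, [/\ U A, A (iter n f x) & A (iter n f y)].
Proof.
move=> cU x y; have [n [A UA sub]] := hwc _ cU x y.
by exists n, A; split => //; apply: sub; [exists x; [left|] | exists y; [right|]].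
Qed.

Lemma weak_top_contraction_fixed_uniq : accessible_space X ->
  forall x y, f x = x -> f y = y -> x = y.
Proof.
move=> hT1 x y fx fy; apply: contrapT => nxy.
have cU : open_cover [set ~` [set x]; ~` [set y]].
  split; first by move=> A [|] ->; apply: closed_openC; exact: accessible_closed_set1.
  apply/seteqP; split => // z _.
  have [->|nzx] := pselect (z = x); first by exists (~` [set y]); [right|].
  by exists (~` [set x]); [left|].
have [n [A [UA]]] := weak_top_contraction_iter cU x y.
by rewrite !iter_fix //; case: UA => -> /=.
Qed.

Lemma weak_top_contraction_fixed_exists : hausdorff_space X -> continuous f ->
  X -> exists x, f x = x.
Proof.
move=> hX hf x0; apply: contrapT => nofix.
have fixfree z : f z <> z by move=> fz; apply: nofix; exists z.
have [n [A [[_ AfA] Ax Afx]]] :=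
  weak_top_contraction_iter (open_cover_fixfree hX hf fixfree) x0 (f x0).
have : (A `&` f @^-1` A) (iter n f x0) by split => //=; rewrite -iterS iterSr.
by rewrite AfA.
Qed.

End WeakTopContraction.

Theorem theorem2 (X : topologicalType) (hX : hausdorff_space X)
  (hne : exists x : X, True) (f : X -> X) (hf : continuous f)
  (hwc : weak_top_contraction f) :
  exists! x : X, f x = x.
Proof.
have [x0 _] := hne.
have [x fx] := weak_top_contraction_fixed_exists hwc hX hf x0.
exists x; split => // y fy.
exact: (weak_top_contraction_fixed_uniq hwc (hausdorff_accessible hX)).
Qed.
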